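(* Let $t\in\mathbb{N}$ and let $F(x)=\mathrm{sign}(w\cdot x-\theta)$ be an LTF over $\{-1,1\}^n$ with every $w_i$ an integer in $\{-t,\dots,t\}$. Then for every $s\in\mathbb{N}$, either $w$ has at most $s$ nonzero coordinates, or the normalized vector $u=w/\|w\|_2$ satisfies $\sum_{i=1}^n u_i^4\le t^2/(s+1)$; i.e. $F$ is either $s$-sparse or $(t/\sqrt{s+1})$-regular.
   Context: $\mathrm{sign}(z)=1$ if $z>0$ and $-1$ otherwise. An LTF is $s$-sparse if its weight vector has at most $s$ nonzero entries. A unit vector $u$ is $\tau$-regular if $\sum_i u_i^4\le\tau^2$; an LTF is $\tau$-regular if it can be written $\mathrm{sign}(u\cdot x-\theta')$ with $\|u\|_2=1$ and $u$ $\tau$-regular. *)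

From mathcomp Require Import all_boot all_order all_algebra.
From mathcomp Require Import reals.
Set Implicit Arguments. Unset Strict Implicit. Unset Printing Implicit Defensive.
Import Order.TTheory GRing.Theory Num.Theory.
Local Open Scope ring_scope.

Definition sgn {R : realType} (z : R) : R := if 0 < z then 1 else -1.

(* the LTF x |-> sign(w . x - theta) on {-1,1}^n, points given as bool vectors
   (true ↦ 1, false ↦ -1) *)
Definition pm1 {R : realType} (b : bool) : R := if b then 1 else -1.
Definition ltf {R : realType} (n : nat) (w : 'I_n -> R) (theta : R)
  (x : 'I_n -> bool) : R :=
  sgn (\sum_(i < n) w i * pm1 (x i) - theta).

Definition nnz {R : realType} (n : nat) (w : 'I_n -> R) : nat :=
  #|[set i : 'I_n | w i != 0]|.

Definition l2norm {R : realType} (n : nat) (w : 'I_n -> R) : R :=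
  Num.sqrt (\sum_(i < n) w i ^+ 2).

Definition normalize {R : realType} (n : nat) (w : 'I_n -> R) : 'I_n -> R :=
  fun i => w i / l2norm w.

Definition regular_vec {R : realType} (n : nat) (u : 'I_n -> R) (tau : R) : Prop :=
  \sum_(i < n) u i ^+ 4 <= tau ^+ 2.

From mathcomp Require Import all_boot all_order all_algebra.
From mathcomp Require Import reals.
Import Order.TTheory GRing.Theory Num.Theory.
Local Open Scope ring_scope.

(* Write S for the squared norm of w. Integer weights have w_i^2 >= 1 on their
   support, so S >= nnz w, and |w_i| <= t gives sum_i w_i^4 <= t^2 S. Hence
   sum_i u_i^4 = (sum_i w_i^4) / S^2 <= t^2 / S <= t^2 / nnz w, which is at
   most t^2 / (s+1) unless w is s-sparse. *)

Lemma intr_sqr_ge1 (R : numDomainType) (z : int) :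
  z != 0 -> 1 <= (z%:~R : R) ^+ 2.
Proof.
move=> z_neq0; rewrite -real_normK ?realz // -intr_norm exprn_ege1 //.
by rewrite ler1z -gtz0_ge1 normr_gt0.
Qed.

Lemma intr_sqr_le (R : numDomainType) (z : int) (t : nat) :
  `|z| <= t%:Z -> (z%:~R : R) ^+ 2 <= t%:R ^+ 2.
Proof.
move=> le_zt; rewrite -real_normK ?realz // -intr_norm.
rewrite ler_sqr ?nnegrE ?ler0n ?ler0z ?normr_ge0 //.
by rewrite -[t%:R]/((t%:Z)%:~R : R) ler_int.
Qed.

Section NormalizedFourthMoment.

Variables (R : realType) (n : nat) (w : 'I_n -> R).

(* No hypothesis on w: for w = 0 both sides are 0, as x / 0 = 0. *)
Lemma sum_normalize_exp4 :
  \sum_(i < n) normalize w i ^+ 4 =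
    (\sum_(i < n) w i ^+ 4) / (\sum_(i < n) w i ^+ 2) ^+ 2.
Proof.
have sumw2_ge0 : 0 <= \sum_(i < n) w i ^+ 2 by apply: sumr_ge0 => i _; apply: sqr_ge0.
rewrite mulr_suml; apply: eq_bigr => i _.
by rewrite /normalize /l2norm expr_div_n -[4%N]/(2 * 2)%N !exprM sqr_sqrtr.
Qed.

Lemma sum_exp4_le (c : R) : (forall i, w i ^+ 2 <= c) ->
  \sum_(i < n) w i ^+ 4 <= c * \sum_(i < n) w i ^+ 2.
Proof.
move=> w2_le_c; rewrite mulr_sumr; apply: ler_sum => i _.
by rewrite (exprD _ 2 2) ler_wpM2r ?sqr_ge0.
Qed.

Lemma nnz_le_sum_sqr : (forall i, w i != 0 -> 1 <= w i ^+ 2) ->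
  (nnz w)%:R <= \sum_(i < n) w i ^+ 2.
Proof.
move=> supp_ge1.
have -> : (nnz w)%:R = \sum_(i < n | w i != 0) 1 :> R.
  by rewrite /nnz -sum1_card natr_sum; apply: eq_bigl => i; rewrite inE.
rewrite [leRHS](bigID (fun i => w i != 0)) /= -[leLHS]addr0.
by rewrite lerD ?ler_sum ?sumr_ge0 // => i _; rewrite sqr_ge0.
Qed.

Lemma sum_normalize_exp4_le (c : R) (k : nat) :
  0 <= c -> (0 < k)%N -> (k <= nnz w)%N ->
  (forall i, w i ^+ 2 <= c) -> (forall i, w i != 0 -> 1 <= w i ^+ 2) ->
  \sum_(i < n) normalize w i ^+ 4 <= c / k%:R.
Proof.
move=> c_ge0 k_gt0 le_k_nnz w2_le_c supp_ge1.
set S := \sum_(i < n) w i ^+ 2.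
have le_k_S : k%:R <= S.
  by apply: le_trans (nnz_le_sum_sqr supp_ge1); rewrite ler_nat.
have S_gt0 : 0 < S by apply: lt_le_trans le_k_S; rewrite ltr0n.
rewrite sum_normalize_exp4 -/S.
apply: (@le_trans _ _ (c * S / S ^+ 2)).
  apply: ler_wpM2r; last exact: sum_exp4_le.
  by rewrite invr_ge0 exprn_ge0 // ltW.
rewrite expr2 invfM mulrA mulfK ?gt_eqF //.
apply: ler_wpM2l => //.
by rewrite lef_pV2 ?posrE ?ltr0n.
Qed.

End NormalizedFourthMoment.

Theorem mainTheorem3 (R : realType) (n t : nat) (w : 'I_n -> int) (theta : R)
  (F : ('I_n -> bool) -> R)
  (hF : F = ltf (fun i => (w i)%:~R) theta)
  (hw : forall i, `|w i| <= t%:Z) :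
  forall s : nat,
    (nnz (fun i => (w i)%:~R : R) <= s)%N \/
    \sum_(i < n) (normalize (fun i => (w i)%:~R : R) i) ^+ 4
      <= (t%:R) ^+ 2 / (s.+1)%:R.
Proof.
move=> s; have [sparse | not_sparse] := leqP (nnz (fun i => (w i)%:~R : R)) s.
  by left.
right; apply: sum_normalize_exp4_le => //.
- exact: sqr_ge0.
- by move=> i; apply: intr_sqr_le.
- by move=> i; rewrite intr_eq0; apply: intr_sqr_ge1.
Qed.
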